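(* Let $f,g,h$ be smooth real functions of one variable with $f\neq 0$, $g\neq 0$, $g'\neq 0$. Then the equation $$u_t-f(u)u_x-g(u)u_{xx}+h(u)u_x^2=0$$ is quasi self-adjoint with the substitution $$\phi(u)=M\exp\left(-\int\frac{g'(u)+h(u)}{g(u)}\,du\right),$$ where $M\neq 0$ is a constant.
   Context: For a differential equation $\mathfrak{F}[u]=0$ in independent variables $t,x$ and dependent variable $u$, introduce a new dependent variable $\nu=\nu(t,x)$. The formal Lagrangian is $\mathfrak{L}=\nu\mathfrak{F}$ and the adjoint is $\mathfrak{F}^*=\frac{\delta\mathfrak{L}}{\delta u}$, where $\frac{\delta}{\delta u}=\frac{\partial}{\partial u}-D_t\frac{\partial}{\partial u_t}-D_x\frac{\partial}{\partial u_x}+D_x^2\frac{\partial}{\partial u_{xx}}$ and $D_t,D_x$ are total derivatives. The equation is quasi self-adjoint if there is a substitution $\nu=\phi(u)\neq 0$ (derivatives of $\nu$ replaced by total derivatives of $\phi(u)$) such that $\mathfrak{F}^*|_{\nu=\phi(u)}=\lambda\mathfrak{F}$ for some coefficient $\lambda=\lambda(t,x,u,\dots)$. *)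

From Stdlib Require Import Reals List.
From Coquelicot Require Import Coquelicot.
Open Scope R_scope.

Definition field2 := R -> R -> R.

(* A (second-order) jet function: E(t, x, u, u_t, u_x, u_xx). *)
Definition jet2 := R -> R -> R -> R -> R -> R -> R.

Definition pt (v : field2) : field2 := fun t x => Derive (fun s => v s x) t.
Definition px (v : field2) : field2 := fun t x => Derive (fun y => v t y) x.

Definition prol (E : jet2) (u : field2) : field2 :=
  fun t x => E t x (u t x) (pt u t x) (px u t x) (px (px u) t x).

Definition dJ_u (E : jet2) : jet2 :=
  fun t x u ut ux uxx => Derive (fun v => E t x v ut ux uxx) u.
Definition dJ_ut (E : jet2) : jet2 :=
  fun t x u ut ux uxx => Derive (fun v => E t x u v ux uxx) ut.
Definition dJ_ux (E : jet2) : jet2 :=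
  fun t x u ut ux uxx => Derive (fun v => E t x u ut v uxx) ux.
Definition dJ_uxx (E : jet2) : jet2 :=
  fun t x u ut ux uxx => Derive (fun v => E t x u ut ux v) uxx.

(* Formal Lagrangian  L = nu * F, with nu a new dependent variable
   (given here as the value of nu as an extra parameter). *)
Definition formal_lagrangian (F : jet2) (nu : R) : jet2 :=
  fun t x u ut ux uxx => nu * F t x u ut ux uxx.

Definition prolL (G : R -> jet2) (u nu : field2) : field2 :=
  fun t x => G (nu t x) t x (u t x) (pt u t x) (px u t x) (px (px u) t x).

(* The adjoint F^* = delta L / delta u, total derivatives being computed as
   actual derivatives along the fields u(t,x), nu(t,x). *)
Definition adjoint (F : jet2) (u nu : field2) : field2 :=
  fun t x =>
    prolL (fun n => dJ_u (formal_lagrangian F n)) u nu t x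
    - pt (prolL (fun n => dJ_ut (formal_lagrangian F n)) u nu) t x
    - px (prolL (fun n => dJ_ux (formal_lagrangian F n)) u nu) t x
    + px (px (prolL (fun n => dJ_uxx (formal_lagrangian F n)) u nu)) t x.

Fixpoint iter_partial (w : list bool) (v : field2) : field2 :=
  match w with
  | nil => v
  | b :: w' => (if b then pt else px) (iter_partial w' v)
  end.

Definition smooth2 (u : field2) : Prop :=
  forall (w : list bool) (t x : R),
    ex_derive (fun s => iter_partial w u s x) t /\
    ex_derive (fun y => iter_partial w u t y) x /\
    continuous (fun p : R * R => iter_partial w u (fst p) (snd p)) (t, x).

Definition smooth1 (f : R -> R) : Prop :=
  forall (n : nat) (y : R), ex_derive (Derive_n f n) y.

Definition quasi_self_adjoint_with (F : jet2) (phi : R -> R) : Prop :=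
  (forall y, phi y <> 0) /\
  exists lambda : jet2,
    forall u : field2, smooth2 u ->
      forall t x,
        adjoint F u (fun t' x' => phi (u t' x')) t x
        = prol lambda u t x * prol F u t x.

Definition eqF (f g h : R -> R) : jet2 :=
  fun _ _ u ut ux uxx => ut - f u * ux - g u * uxx + h u * ux ^ 2.

(** With [nu = phi(u)] the adjoint of [u_t - f u_x - g u_xx + h u_x^2] is a
    combination of [u_t], [u_x], [u_x^2], [u_xx] whose [f'] and [h'] terms
    cancel identically.  If [(phi g)' = - phi h], i.e. [phi'/phi = -(g'+h)/g],
    the remaining coefficients are exactly [-phi'(u)] times those of the
    equation, so [F^* = -phi'(u) F].  The substitution [phi = M exp(-A)] with
    [A' = (g'+h)/g] solves this linear ODE and does not vanish. *)
From Stdlib Require Import Reals List.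
From Coquelicot Require Import Coquelicot.
Open Scope R_scope.

Lemma smooth1_ex_derive (f : R -> R) : smooth1 f -> forall y, ex_derive f y.
Proof. intros Hf y. exact (Hf 0%nat y). Qed.

Lemma pt_ext (v w : field2) t x :
  (forall s, v s x = w s x) -> pt v t x = pt w t x.
Proof. intro E. apply Derive_ext, E. Qed.

Lemma px_ext (v w : field2) t x :
  (forall y, v t y = w t y) -> px v t x = px w t x.
Proof. intro E. apply Derive_ext, E. Qed.

Lemma pt_comp (phi : R -> R) (u : field2) t x :
  (forall y, ex_derive phi y) -> ex_derive (fun s => u s x) t ->
  pt (fun t' x' => phi (u t' x')) t x = Derive phi (u t x) * pt u t x.
Proof.
  intros Hphi Hu. unfold pt. rewrite Derive_comp; auto. apply Rmult_comm.
Qed.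

(* [auto_derive] writes the derivative of an opaque [f] as [Derive (fun x => f x)],
   which [ring] does not identify with [Derive f]. *)
Ltac fold_Derive :=
  repeat match goal with
  | |- context [Derive (fun y => ?k y)] =>
      is_var k; change (Derive (fun y => k y)) with (Derive k)
  end.

Section FormalLagrangian.

Variables f g h : R -> R.
Hypothesis f_diff : forall y, ex_derive f y.
Hypothesis g_diff : forall y, ex_derive g y.
Hypothesis h_diff : forall y, ex_derive h y.

Let L := formal_lagrangian (eqF f g h).

Lemma dJ_u_eqF n t x v vt vx vxx :
  dJ_u (L n) t x v vt vx vxx
  = n * (- Derive f v * vx - Derive g v * vxx + Derive h v * vx ^ 2).
Proof.
  apply is_derive_unique; unfold L, formal_lagrangian, eqF.
  auto_derive; [auto | fold_Derive; ring].
Qed.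

Lemma dJ_ut_eqF n t x v vt vx vxx : dJ_ut (L n) t x v vt vx vxx = n.
Proof.
  apply is_derive_unique; unfold L, formal_lagrangian, eqF.
  auto_derive; [auto | ring].
Qed.

Lemma dJ_ux_eqF n t x v vt vx vxx :
  dJ_ux (L n) t x v vt vx vxx = n * (- f v + 2 * h v * vx).
Proof.
  apply is_derive_unique; unfold L, formal_lagrangian, eqF.
  auto_derive; [auto | ring].
Qed.

Lemma dJ_uxx_eqF n t x v vt vx vxx : dJ_uxx (L n) t x v vt vx vxx = - n * g v.
Proof.
  apply is_derive_unique; unfold L, formal_lagrangian, eqF.
  auto_derive; [auto | ring].
Qed.

Variable phi : R -> R.
Hypothesis phi_diff : forall y, ex_derive phi y.
Hypothesis phi_g_h : forall y, Derive phi y * g y + phi y * (Derive g y + h y) = 0.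

Local Notation nu u := (fun t' x' => phi (u t' x')).

Variable u : field2.

Lemma adjoint_eqF_ut_term t x :
  ex_derive (fun s => u s x) t ->
  pt (prolL (fun n => dJ_ut (L n)) u (nu u)) t x = Derive phi (u t x) * pt u t x.
Proof.
  intro Hu. rewrite <- pt_comp by assumption.
  apply pt_ext; intro s. apply dJ_ut_eqF.
Qed.

Lemma adjoint_eqF_ux_term t x :
  ex_derive (fun y => u t y) x -> ex_derive (fun y => px u t y) x ->
  px (prolL (fun n => dJ_ux (L n)) u (nu u)) t x
  = Derive phi (u t x) * px u t x * (- f (u t x) + 2 * h (u t x) * px u t x)
    + phi (u t x) * (- Derive f (u t x) * px u t x
                     + 2 * (Derive h (u t x) * px u t x ^ 2 + h (u t x) * px (px u) t x)).
Proof.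
  intros Hu Hux.
  rewrite (px_ext _ (fun t' y => phi (u t' y) * (- f (u t' y) + 2 * h (u t' y) * px u t' y)))
    by (intro y; apply dJ_ux_eqF).
  apply is_derive_unique. auto_derive.
  - repeat split; auto.
  - fold_Derive. unfold px. ring.
Qed.

(* The relation [(phi g)' = - phi h] collapses the first [x]-derivative. *)
Lemma adjoint_eqF_uxx_first_derivative t x :
  ex_derive (fun y => u t y) x ->
  px (prolL (fun n => dJ_uxx (L n)) u (nu u)) t x
  = phi (u t x) * h (u t x) * px u t x.
Proof.
  intro Hu.
  rewrite (px_ext _ (fun t' y => - phi (u t' y) * g (u t' y))) by (intro y; apply dJ_uxx_eqF).
  apply is_derive_unique. auto_derive.
  - repeat split; auto.
  - fold_Derive. unfold px.
    transitivity (phi (u t x) * h (u t x) * Derive (fun y => u t y) x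
      - Derive (fun y => u t y) x * (Derive phi (u t x) * g (u t x)
                                      + phi (u t x) * (Derive g (u t x) + h (u t x)))).
    + ring.
    + rewrite phi_g_h. ring.
Qed.

Lemma adjoint_eqF_uxx_term t x :
  (forall y, ex_derive (fun y => u t y) y) -> ex_derive (fun y => px u t y) x ->
  px (px (prolL (fun n => dJ_uxx (L n)) u (nu u))) t x
  = Derive phi (u t x) * h (u t x) * px u t x ^ 2
    + phi (u t x) * (Derive h (u t x) * px u t x ^ 2 + h (u t x) * px (px u) t x).
Proof.
  intros Hu Hux.
  rewrite (px_ext _ (fun t' y => phi (u t' y) * h (u t' y) * px u t' y))
    by (intro y; apply adjoint_eqF_uxx_first_derivative, Hu).
  apply is_derive_unique. auto_derive.
  - repeat split; auto.
  - fold_Derive. unfold px. ring.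
Qed.

Lemma adjoint_eqF t x :
  (forall y, ex_derive (fun y => u t y) y) -> ex_derive (fun s => u s x) t ->
  ex_derive (fun y => px u t y) x ->
  adjoint (eqF f g h) u (nu u) t x = - Derive phi (u t x) * prol (eqF f g h) u t x.
Proof.
  intros Hux Hut Huxx. unfold adjoint.
  rewrite adjoint_eqF_ut_term, adjoint_eqF_ux_term, adjoint_eqF_uxx_term by auto.
  unfold prolL. rewrite dJ_u_eqF.
  transitivity (- Derive phi (u t x) * prol (eqF f g h) u t x
    - px (px u) t x * (Derive phi (u t x) * g (u t x)
                       + phi (u t x) * (Derive g (u t x) + h (u t x)))).
  - unfold prol, eqF. ring.
  - rewrite phi_g_h. ring.
Qed.

End FormalLagrangian.

Theorem quasi_self_adjoint_eqF (f g h phi : R -> R) :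
  (forall y, ex_derive f y) -> (forall y, ex_derive g y) -> (forall y, ex_derive h y) ->
  (forall y, ex_derive phi y) -> (forall y, phi y <> 0) ->
  (forall y, Derive phi y * g y + phi y * (Derive g y + h y) = 0) ->
  quasi_self_adjoint_with (eqF f g h) phi.
Proof.
  intros Hf Hg Hh Hphi Hphi0 Hode. split; [exact Hphi0 |].
  exists (fun _ _ v _ _ _ => - Derive phi v).
  intros u Hu t x.
  apply adjoint_eqF; auto.
  - intro y. apply (Hu nil t y).
  - apply (Hu nil t x).
  - apply (Hu (false :: nil) t x).
Qed.

Theorem corollary1 (f g h : R -> R) (M : R) (A : R -> R) :
  smooth1 f -> smooth1 g -> smooth1 h ->
  f <> (fun _ => 0) ->
  (forall y, g y <> 0) ->
  Derive g <> (fun _ => 0) ->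
  M <> 0 ->
  (forall y, is_derive A y ((Derive g y + h y) / g y)) ->
  quasi_self_adjoint_with (eqF f g h) (fun y => M * exp (- A y)).
Proof.
  intros Hf Hg Hh _ Hg0 _ HM HA.
  assert (HA' : forall y, ex_derive A y) by (intro y; eexists; apply HA).
  apply quasi_self_adjoint_eqF; auto using smooth1_ex_derive.
  - intro y. auto_derive. apply HA'.
  - intro y. apply Rmult_integral_contrapositive_currified; [exact HM |].
    apply Rgt_not_eq, exp_pos.
  - intro y.
    replace (Derive (fun y => M * exp (- A y)) y)
      with (- M * exp (- A y) * ((Derive g y + h y) / g y)).
    + field. apply Hg0.
    + symmetry. apply is_derive_unique. auto_derive; [apply HA' |].
      fold_Derive. rewrite (is_derive_unique _ _ _ (HA y)). ring.
Qed.
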